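(* Let $k\ge 2$, $q\in\{1,\dots,k-1\}$, $n\ge 3$ and $i\ge 1$ be integers. Consider the cylindrical Lights Out game on a board with $i$ rows and $n$ columns whose lights have $k$ states, with every light initially in state $k-q$. Define the integer sequence $S_0=0$, $S_1=-q$, and $S_j=-q-S_{j-2}-3S_{j-1}$ for $j\ge 2$. Then the game is one-pass solvable if and only if $S_i\equiv 0 \pmod{k}$.
   Context: Cylindrical Lights Out game: a grid of buttons with $i$ rows (numbered $1,\dots,i$ from top to bottom) and $n$ columns, whose left and right sides are identified, so column $1$ and column $n$ are adjacent; rows do not wrap around. Each button has a light whose state is an element of $\mathbb{Z}/k\mathbb{Z}$, state $0$ meaning ''off''. Pressing a button once adds $1 \pmod k$ to the state of its own light and to the states of the lights orthogonally adjacent to it (above, below, left, right, where they exist, with columns taken cyclically). One-pass chasing: for $r=2,3,\dots,i$ in turn, press each button in row $r$ the number of times in $\{0,\dots,k-1\}$ needed to bring the light directly above it (in row $r-1$) to state $0$. The game is one-pass solvable if after this procedure all lights on the board are in state $0$. *)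

From mathcomp Require Import all_boot all_order all_algebra.
Set Implicit Arguments. Unset Strict Implicit. Unset Printing Implicit Defensive.
Import GRing.Theory Num.Theory.

(* A board state: row r (1 <= r <= i) and column c (0 <= c < n) give the
   state of the light, a natural number read modulo k (always kept < k). *)
Definition board := nat -> nat -> nat.

Definition affected (i n r c r' c' : nat) : bool :=
  [&& 1 <= r' <= i, c' < n &
    ((r' == r) && [|| c' == c, c' == (c.+1 %% n) | c == (c'.+1 %% n)])
    || ((c' == c) && ((r' == r.+1) || (r == r'.+1)))].

Definition press (k i n : nat) (b : board) (r c t : nat) : board :=
  fun r' c' => if affected i n r c r' c' then (b r' c' + t) %% k else b r' c'.

(* Press each button of row r (columns 0, ..., n-1 in turn) the number of
   times in {0..k-1} needed to bring the light above it to state 0. *)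
Definition chase_row (k i n : nat) (b : board) (r : nat) : board :=
  foldl (fun b' c => press k i n b' r c ((k - b' r.-1 c %% k) %% k)) b (iota 0 n).

Definition chase (k i n : nat) (b : board) : board :=
  foldl (chase_row k i n) b (iota 2 i.-1).

Definition all_off (k i n : nat) (b : board) : Prop :=
  forall r c, 1 <= r <= i -> c < n -> b r c %% k = 0.

Definition one_pass_solvable (k i n : nat) (b : board) : Prop :=
  all_off k i n (chase k i n b).

Definition init_board (k q : nat) : board := fun _ _ => k - q.

Fixpoint Sseq (q : int) (j : nat) : int * int :=
  match j with
  | 0 => (0, - q)
  | j'.+1 => let: (a, b) := Sseq q j' in (b, - q - a - 3 * b)
  end%R.
Definition S (q : int) (j : nat) : int := (Sseq q j).1.

From mathcomp Require Import all_boot all_order all_algebra.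
From mathcomp Require Import zify.
Import GRing.Theory Num.Theory.

(* After rows 2, ..., m have been chased, the board is constant along each
   row modulo k: rows above m are dark, row m holds S_m, row m+1 holds
   -q - S_(m-1) and the rows below still hold -q.  Chasing row m+1 therefore
   presses all its buttons the same number t = -S_m of times, which adds t to
   rows m and m+2 and 3t to row m+1 (n >= 3 keeps the three horizontal
   neighbours distinct); this advances the profile by exactly the recurrence
   defining S.  At the end only row i can be lit, and it holds S_i. *)

Definition cyc_pred (n c : nat) : nat := if c == 0 then n.-1 else c.-1.

Lemma modSn_small n c : c < n -> c.+1 %% n = if c.+1 == n then 0 else c.+1.
Proof.
by move=> lt_cn; case: eqP => [->|ne]; rewrite ?modnn // modn_small //; lia.
Qed.

Lemma eq_modSn_cyc_pred n c c' :
  c < n -> c' < n -> (c' == c.+1 %% n) = (c == cyc_pred n c').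
Proof.
move=> lt_cn lt_c'n; rewrite modSn_small // /cyc_pred.
by case: (c.+1 =P n); case: (c' =P 0) => *; apply/eqP/eqP; lia.
Qed.

Lemma uniq_cyc_neighbours n c :
  2 < n -> c < n -> uniq [:: c; c.+1 %% n; cyc_pred n c].
Proof.
move=> gt2n lt_cn; rewrite /= modSn_small // /cyc_pred !inE.
by case: (c.+1 =P n); case: (c =P 0) => *; lia.
Qed.

Lemma count_mem_iota (s : seq nat) n :
  uniq s -> all (fun x => x < n) s -> count (mem s) (iota 0 n) = size s.
Proof.
move=> uniq_s /allP lt_s; rewrite -size_filter; apply: perm_size.
apply: uniq_perm => [|//|x]; first exact/filter_uniq/iota_uniq.
by rewrite mem_filter mem_iota add0n andb_idr // => /lt_s.
Qed.

Definition row_press_count (r r' : nat) : nat :=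
  if r' == r then 3 else if (r' == r.+1) || (r == r'.+1) then 1 else 0.

Lemma count_affected i n r r' c' :
  2 < n -> 0 < r' <= i -> c' < n ->
  count (fun c => affected i n r c r' c') (iota 0 n) = row_press_count r r'.
Proof.
move=> gt2n r'_in lt_c'n.
pose nbrs := if r' == r then [:: c'; c'.+1 %% n; cyc_pred n c']
             else if (r' == r.+1) || (r == r'.+1) then [:: c'] else [::].
have lt_cyc_pred : cyc_pred n c' < n by rewrite /cyc_pred; case: eqP; lia.
have -> : count (fun c => affected i n r c r' c') (iota 0 n) =
          count (mem nbrs) (iota 0 n).
  apply: eq_in_count => c; rewrite mem_iota add0n => /andP[_ lt_cn] /=.
  rewrite /affected r'_in lt_c'n /= /nbrs.
  case: eqP => [->|_]; last by case: ifP; rewrite ?inE ?andbT ?andbF // eq_sym.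
  rewrite (ltn_eqF (ltnSn r)) andbF orbF !inE -eq_modSn_cyc_pred //.
  by rewrite /= (eq_sym c'); congr (_ || _); apply: orbC.
rewrite (@count_mem_iota nbrs) /nbrs /row_press_count.
- by case: ifP => // _; case: ifP.
- by case: ifP => _; [exact: uniq_cyc_neighbours | case: ifP].
- case: ifP => _ /=; last by case: ifP => _ /=; rewrite ?lt_c'n.
  by rewrite lt_c'n ltn_mod lt_cyc_pred; lia.
Qed.

Definition press_row (k i n : nat) (b : board) (r t : nat) : board :=
  foldl (fun b' c => press k i n b' r c t) b (iota 0 n).

Lemma press_prev_row k i n (b : board) r c t c' :
  0 < r -> c' != c -> press k i n b r c t r.-1 c' = b r.-1 c'.
Proof.
move=> gt0r ne_c'c; rewrite /press /affected (negbTE ne_c'c) andFb orbF.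
case: r gt0r => //= r _.
by rewrite (ltn_eqF (ltnSn r)) andFb !andbF.
Qed.

Lemma chase_row_uniform k i n (b : board) r t :
  0 < r -> (forall c, c < n -> (k - b r.-1 c %% k) %% k = t) ->
  chase_row k i n b r = press_row k i n b r t.
Proof.
move=> gt0r t_uniform; rewrite /chase_row /press_row.
have : {in iota 0 n, forall c, (k - b r.-1 c %% k) %% k = t}.
  by move=> c; rewrite mem_iota => /andP[_ /t_uniform].
have := iota_uniq 0 n; clear t_uniform.
elim: (iota 0 n) b => //= c cs IHcs b /andP[c_notin_cs uniq_cs] t_uniform.
rewrite t_uniform ?mem_head //; apply: IHcs => // c' c'_in_cs.
rewrite press_prev_row ?t_uniform ?inE ?c'_in_cs ?orbT //.
by apply: contraNneq c_notin_cs => <-.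
Qed.

Section ResidueArithmetic.

Local Open Scope ring_scope.

Variable k : nat.
Hypothesis gt1k : (1 < k)%N.

Lemma Zp_nat_eq0 x : (x%:R == 0 :> 'Z_k) = (k %| x)%N.
Proof. by rewrite /dvdn -val_eqE /= val_Zp_nat. Qed.

Lemma Zp_intr_eq0 (z : int) : (z%:~R == 0 :> 'Z_k) = (k%:Z %| z)%Z.
Proof.
case: z => x; first by rewrite Zp_nat_eq0.
by rewrite NegzE mulrNz oppr_eq0 rpredN Zp_nat_eq0.
Qed.

Lemma Zp_nat_compl x : ((k - x %% k) %% k)%N%:R = - x%:R :> 'Z_k.
Proof.
have le_xk : (x %% k <= k)%N by rewrite ltnW // ltn_mod ltnW.
by rewrite Zp_nat_mod // (natrB _ le_xk) pchar_Zp // Zp_nat_mod // sub0r.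
Qed.

Lemma press_Zp i n (b : board) r c t r' c' :
  (press k i n b r c t r' c')%:R =
  (b r' c')%:R + t%:R *+ affected i n r c r' c' :> 'Z_k.
Proof.
by rewrite /press; case: affected; rewrite ?Zp_nat_mod ?natrD ?addr0.
Qed.

(* In ring_scope a bare 0 : nat would be GRing.zero, not O. *)
Lemma press_row_Zp i n (b : board) r t r' c' :
  (press_row k i n b r t r' c')%:R =
  (b r' c')%:R + t%:R *+ count (fun c => affected i n r c r' c') (iota 0%N n)
  :> 'Z_k.
Proof.
rewrite /press_row; elim: (iota 0%N n) b => [|c cs IHcs] b /=.
  by rewrite addr0.
by rewrite IHcs press_Zp mulrnDr addrA.
Qed.

End ResidueArithmetic.

Lemma SseqE q m : Sseq q m = (S q m, S q m.+1).
Proof. by rewrite /S /=; case: (Sseq q m). Qed.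

Lemma S_rec q m : (S q m.+2 = - q - S q m - 3 * S q m.+1)%R.
Proof. by rewrite {1}/S /= SseqE. Qed.

Definition chase_profile (q m r : nat) : int :=
  if r < m then 0%R else if r == m then S q m
  else if r == m.+1 then (- q%:Z - S q m.-1)%R else (- q%:Z)%R.

Lemma chase_profile1 q r : 0 < r -> chase_profile q 1 r = (- q%:Z)%R.
Proof.
rewrite /chase_profile; case: r => // [[|[|r]]] _ //=.
by rewrite /S /= subr0.
Qed.

Lemma chase_profile_step q m r : 0 < m ->
  chase_profile q m.+1 r =
  (chase_profile q m r - S q m * (row_press_count m.+1 r)%:R)%R.
Proof.
case: m => // m _; rewrite /chase_profile /row_press_count.
by repeat (case: ifP => ? /=); rewrite ?S_rec; lia.
Qed.

Section ChaseProfile.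

Variables k i n q : nat.
Hypotheses (gt1k : 1 < k) (gt2n : 2 < n) (le_qk : q <= k).

Definition follows_profile (m : nat) (b : board) : Prop :=
  forall r c, 0 < r <= i -> c < n ->
  ((b r c)%:R = (chase_profile q m r)%:~R :> 'Z_k)%R.

Lemma follows_profile_init : follows_profile 1 (init_board k q).
Proof.
move=> r c /andP[gt0r _] _; rewrite chase_profile1 // /init_board.
by rewrite natrB // pchar_Zp // sub0r mulrNz.
Qed.

Lemma chase_row_profile m (b : board) : 0 < m < i ->
  follows_profile m b -> follows_profile m.+1 (chase_row k i n b m.+1).
Proof.
move=> /andP[gt0m lt_mi] b_m; have gt0n : 0 < n := ltnW (ltnW gt2n).
have row_m c : c < n -> ((b m c)%:R = (S q m)%:~R :> 'Z_k)%R.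
  by move=> lt_cn; rewrite b_m ?gt0m ?(ltnW lt_mi) // /chase_profile ltnn eqxx.
rewrite (@chase_row_uniform k i n b m.+1 ((k - b m 0 %% k) %% k)) //; last first.
  move=> c lt_cn; congr ((k - _) %% k).
  by rewrite -(val_Zp_nat gt1k) row_m // -(row_m 0) ?(val_Zp_nat gt1k).
move=> r c r_in lt_cn.
rewrite press_row_Zp // count_affected // b_m // Zp_nat_compl // row_m //.
rewrite chase_profile_step //.
by rewrite rmorphB /= rmorphM /= rmorph_nat mulr_natr mulNrn.
Qed.

Lemma chase_rows_profile m : 0 < m <= i ->
  follows_profile m (foldl (chase_row k i n) (init_board k q) (iota 2 m.-1)).
Proof.
elim: m => // m IHm /andP[_ le_m1_i].
case: m IHm le_m1_i => [|m] IHm lt_m1_i; first exact: follows_profile_init.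
have -> : iota 2 m.+1 = rcons (iota 2 m) m.+2.
  by rewrite -cats1 -(addn1 m) iotaD add2n addn1.
rewrite foldl_rcons.
by apply: chase_row_profile; [exact: lt_m1_i | exact/IHm/ltnW].
Qed.

Lemma follows_profile_all_off (b : board) :
  0 < i -> follows_profile i b -> all_off k i n b <-> (k%:Z %| S q i)%Z.
Proof.
move=> gt0i b_i; rewrite -Zp_intr_eq0 //.
have off_iff r c : 0 < r <= i -> c < n ->
    b r c %% k = 0 <-> ((chase_profile q i r)%:~R == 0 :> 'Z_k)%R.
  by move=> r_in lt_cn; rewrite -(b_i r c) // Zp_nat_eq0 //; split => /eqP.
have i_in : 0 < i <= i by rewrite gt0i leqnn.
have gt0n : 0 < n := ltnW (ltnW gt2n).
rewrite /all_off; split => [b_off | S_i_0 r c r_in lt_cn].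
  have := off_iff i 0 i_in gt0n; rewrite /chase_profile ltnn eqxx => /iffLR.
  by apply; apply: b_off.
apply/(off_iff r c r_in lt_cn); rewrite /chase_profile.
case: ltnP => [_|le_ir]; first by rewrite mulr0z.
have -> : r = i by apply/anti_leq; case/andP: r_in => _ ->.
by rewrite eqxx.
Qed.

End ChaseProfile.

Theorem mainTheorem1 (k q n i : nat) :
  2 <= k -> 1 <= q <= k - 1 -> 3 <= n -> 1 <= i ->
  one_pass_solvable k i n (init_board k q) <-> (k%:Z %| S q%:Z i)%Z.
Proof.
move=> gt1k /andP[_ le_q_km1] gt2n gt0i.
have le_qk : q <= k := leq_trans le_q_km1 (leq_subr 1 k).
apply: follows_profile_all_off => //.
by apply: chase_rows_profile; rewrite ?gt0i ?leqnn.
Qed.
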